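(* Let $G=(V,D,B)$ be a mixed graph, $v\in V$, and $Y\subseteq V\setminus(\{v\}\cup\mathrm{sib}(v))$ with $|Y|=|\mathrm{pa}(v)|=n$. Write $Y=\{y_1,\dots,y_n\}$, $\mathrm{pa}(v)=\{p_1,\dots,p_n\}$, and for $(\Lambda,\Omega)\in\Theta$ with $\Sigma=\phi_G(\Lambda,\Omega)$ define the $n\times n$ matrix $\mathbf{A}$ by $\mathbf{A}_{ij}=[(I-\Lambda)^T\Sigma]_{y_ip_j}$ if $y_i\in\mathrm{htr}(v)$ and $\mathbf{A}_{ij}=\Sigma_{y_ip_j}$ if $y_i\notin\mathrm{htr}(v)$. If $Y$ satisfies the half-trek criterion with respect to $v$, then $\mathbf{A}$ is generically invertible, i.e. $\det\mathbf{A}$, as a function of $(\Lambda,\Omega)\in\Theta$, is nonzero outside a proper algebraic subset of $\Theta$.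
   Context: A mixed graph is $G=(V,D,B)$ with $V=[m]$, $D$ directed edges $v\to w$, $B$ symmetric bidirected edges $v\leftrightarrow w$, no self-loops. $\mathrm{pa}(v)=\{w:w\to v\in D\}$, $\mathrm{sib}(v)=\{w:w\leftrightarrow v\in B\}$. $\mathbb{R}^D_{\mathrm{reg}}$: real $m\times m$ $\Lambda$ with $\lambda_{vw}=0$ for $v\to w\notin D$ and $I-\Lambda$ invertible; $\mathrm{PD}(B)$: positive definite symmetric $\Omega$ with $\omega_{vw}=0$ for $v\ne w$, $v\leftrightarrow w\notin B$; $\Theta=\mathbb{R}^D_{\mathrm{reg}}\times\mathrm{PD}(B)$; $\phi_G(\Lambda,\Omega)=(I-\Lambda)^{-T}\Omega(I-\Lambda)^{-1}$. A proper algebraic subset of $\Theta$ is the zero set in $\Theta$ of polynomials in the entries, not all of $\Theta$. A half-trek from $y$ to $w$ is a path $y\leftrightarrow w_0\to w_1\to\cdots\to w_r=w$ (left side $\{y\}$, right side $\{w_0,\dots,w_r\}$) or $y\to w_1\to\cdots\to w_r=w$, $r\ge0$ (left side $\{y\}$, right side $\{y,w_1,\dots,w_r\}$); nodes may repeat. $\mathrm{htr}(v)$ is the set of $w\in V\setminus(\{v\}\cup\mathrm{sib}(v))$ reachable from $v$ by a half-trek. A system of half-treks from $X$ to $Y$: half-treks with distinct sources forming $X$ and distinct targets forming $Y$; no sided intersection: pairwise disjoint left sides and pairwise disjoint right sides. $Y$ satisfies the half-trek criterion w.r.t. $v$ if $|Y|=|\mathrm{pa}(v)|$, $Y\cap(\{v\}\cup\mathrm{sib}(v))=\emptyset$,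 and there is a system of half-treks with no sided intersection from $Y$ to $\mathrm{pa}(v)$. *)

From HB Require Import structures.
From mathcomp Require Import all_boot all_order all_algebra.
Set Implicit Arguments. Unset Strict Implicit. Unset Printing Implicit Defensive.
Import Order.TTheory GRing.Theory Num.Theory.
Local Open Scope ring_scope.

(* D i j  <->  directed edge i -> j ;  B i j <-> bidirected edge i <-> j *)
Definition mixed_graph (m : nat) (D B : rel 'I_m) : Prop :=
  irreflexive D /\ irreflexive B /\ symmetric B.

Definition pa (m : nat) (D : rel 'I_m) (v : 'I_m) : {set 'I_m} := [set w | D w v].
Definition sib (m : nat) (B : rel 'I_m) (v : 'I_m) : {set 'I_m} := [set w | B w v].

(* A half-trek with source y is encoded by its right side rs = h :: t:
   either h = y (directed half-trek y -> w1 -> ... -> wr, rs = y :: w1 .. wr)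
   or y <-> h (half-trek y <-> w0 -> w1 -> ... -> wr, rs = w0 :: w1 .. wr);
   in both cases h -> t1 -> t2 -> ... must be directed edges. *)
Definition half_trek (m : nat) (D B : rel 'I_m) (y : 'I_m) (rs : seq 'I_m) : bool :=
  if rs is h :: t then ((h == y) || B y h) && path D h t else false.

Definition ht_target (m : nat) (y : 'I_m) (rs : seq 'I_m) : 'I_m := last y rs.
Definition ht_left (m : nat) (y : 'I_m) (rs : seq 'I_m) : seq 'I_m := [:: y].
Definition ht_right (m : nat) (y : 'I_m) (rs : seq 'I_m) : seq 'I_m := rs.

Definition htr (m : nat) (D B : rel 'I_m) (v w : 'I_m) : Prop :=
  w != v /\ ~~ B v w /\ exists rs, half_trek D B v rs /\ ht_target v rs = w.

Definition ht_system (m : nat) (D B : rel 'I_m) (X Y : {set 'I_m}) : Prop :=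
  exists s : seq ('I_m * seq 'I_m),
    all (fun t => half_trek D B t.1 t.2) s /\
    uniq (map fst s) /\ [set x in map fst s] = X /\
    uniq (map (fun t => ht_target t.1 t.2) s) /\
    [set x in map (fun t => ht_target t.1 t.2) s] = Y /\
    pairwise (fun a b => [disjoint ht_left a.1 a.2 & ht_left b.1 b.2]) s /\
    pairwise (fun a b => [disjoint ht_right a.1 a.2 & ht_right b.1 b.2]) s.

Definition HTC (m : nat) (D B : rel 'I_m) (v : 'I_m) (Y : {set 'I_m}) : Prop :=
  #|Y| = #|pa D v| /\ Y :&: (v |: sib B v) = set0 /\ ht_system D B Y (pa D v).

Definition in_RDreg (R : realFieldType) (m : nat) (D : rel 'I_m) (L : 'M[R]_m) : Prop :=
  (forall i j, ~~ D i j -> L i j = 0) /\ (1%:M - L) \in unitmx.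

Definition in_PD (R : realFieldType) (m : nat) (B : rel 'I_m) (O : 'M[R]_m) : Prop :=
  O^T = O /\ (forall i j, i != j -> ~~ B i j -> O i j = 0) /\
  (forall x : 'cV[R]_m, x != 0 -> 0 < (x^T *m O *m x) ord0 ord0).

Definition in_Theta (R : realFieldType) (m : nat) (D B : rel 'I_m) (L O : 'M[R]_m) : Prop :=
  in_RDreg D L /\ in_PD B O.

Definition Sigma (R : realFieldType) (m : nat) (L O : 'M[R]_m) : 'M[R]_m :=
  (invmx (1%:M - L))^T *m O *m invmx (1%:M - L).

Inductive mpoly (R : Type) (X : Type) : Type :=
| MConst of R
| MVar of X
| MAdd of mpoly R X & mpoly R X
| MMul of mpoly R X & mpoly R X.

Fixpoint meval (R : pzRingType) (X : Type) (e : X -> R) (p : mpoly R X) : R :=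
  match p with
  | MConst c => c
  | MVar x => e x
  | MAdd p q => meval e p + meval e q
  | MMul p q => meval e p * meval e q
  end.

Definition theta_var (m : nat) : Type := (('I_m * 'I_m) + ('I_m * 'I_m))%type.

Definition theta_env (R : realFieldType) (m : nat) (L O : 'M[R]_m) (x : theta_var m) : R :=
  match x with inl (i, j) => L i j | inr (i, j) => O i j end.

(* f is nonzero outside a proper algebraic subset of Theta: there are
   polynomials ps whose zero set in Theta is not all of Theta, and f is
   nonzero at every point of Theta outside that zero set. *)
Definition generically_nonzero (R : realFieldType) (m : nat) (D B : rel 'I_m)
    (f : 'M[R]_m -> 'M[R]_m -> R) : Prop :=
  exists ps : seq (mpoly R (theta_var m)),
    (exists L O, in_Theta D B L O /\ has (fun p => meval (theta_env L O) p != 0) ps) /\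
    (forall L O, in_Theta D B L O ->
       has (fun p => meval (theta_env L O) p != 0) ps -> f L O != 0).

(* Proof.  det A is a rational function of (Lambda, Omega) whose denominator is
   a power of det (I - Lambda): multiplying row i of A by det (I - Lambda) ^+ 2
   gives a matrix A_cleared with polynomial entries (invmx = adj / det).  Since
   det (I - Lambda) never vanishes on Theta, det A is nonzero wherever the
   polynomial det A_cleared is, so it suffices to exhibit ONE point of Theta at
   which det A <> 0 (generically_nonzero_of_witness).

   The point is built from the half-trek system of the criterion.  We first
   read it as a family of pairwise disjoint, repetition-free right sides r i,
   from y i to pa(v) (trek families), and choose one of minimal total weight;
   its "blocking" relation (trek k starts with y k <-> top k and y k lies on
   trek k') is then acyclic, since a cycle could be rotated away.  At the
   witness, Lambda has a 1 on each edge of the right sides, so (I - Lambda)^-1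
   is the 0/1 reachability matrix along them, and Omega = I + sum of
   u_k u_k^T with u_k = e_(y k) + e_(top k) over bidirected starts.  All
   entries of A are then nonnegative, A i (tau i) >= 1 where p (tau i) ends
   trek i, and any other nonzero entry strictly decreases an explicit rank of
   the rows, so after permuting columns det A is the product of its diagonal. *)

From HB Require Import structures.
From mathcomp Require Import all_boot all_order all_algebra fingroup perm zify.
Import Order.TTheory GRing.Theory Num.Theory.
Set Implicit Arguments. Unset Strict Implicit. Unset Printing Implicit Defensive.

Section PolynomialFunctions.
Variables (R : realFieldType) (m : nat).
Local Open Scope ring_scope.

Definition poly_fun (f : 'M[R]_m -> 'M[R]_m -> R) : Prop :=
  exists q : mpoly R (theta_var m), forall L O, meval (theta_env L O) q = f L O.

Definition poly_mx k l (F : 'M[R]_m -> 'M[R]_m -> 'M[R]_(k, l)) : Prop :=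
  forall i j, poly_fun (fun L O => F L O i j).

Lemma poly_fun_ext f g : (forall L O, f L O = g L O) -> poly_fun f -> poly_fun g.
Proof. by move=> e [q hq]; exists q => L O; rewrite hq e. Qed.

Lemma poly_fun_const c : poly_fun (fun _ _ => c).
Proof. by exists (MConst _ c). Qed.

Lemma poly_fun_add f g : poly_fun f -> poly_fun g -> poly_fun (fun L O => f L O + g L O).
Proof. by move=> [p hp] [q hq]; exists (MAdd p q) => L O /=; rewrite hp hq. Qed.

Lemma poly_fun_mul f g : poly_fun f -> poly_fun g -> poly_fun (fun L O => f L O * g L O).
Proof. by move=> [p hp] [q hq]; exists (MMul p q) => L O /=; rewrite hp hq. Qed.

Lemma poly_fun_sum (I : Type) (s : seq I) (F : I -> 'M[R]_m -> 'M[R]_m -> R) :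
  (forall x, poly_fun (F x)) -> poly_fun (fun L O => \sum_(x <- s) F x L O).
Proof.
move=> hF; elim: s => [|x s IH].
  by apply: poly_fun_ext (poly_fun_const 0) => L O; rewrite big_nil.
by apply: poly_fun_ext (poly_fun_add (hF x) IH) => L O; rewrite big_cons.
Qed.

Lemma poly_fun_prod (I : Type) (s : seq I) (F : I -> 'M[R]_m -> 'M[R]_m -> R) :
  (forall x, poly_fun (F x)) -> poly_fun (fun L O => \prod_(x <- s) F x L O).
Proof.
move=> hF; elim: s => [|x s IH].
  by apply: poly_fun_ext (poly_fun_const 1) => L O; rewrite big_nil.
by apply: poly_fun_ext (poly_fun_mul (hF x) IH) => L O; rewrite big_cons.
Qed.

Lemma poly_fun_det k (F : 'M[R]_m -> 'M[R]_m -> 'M[R]_k) :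
  poly_mx F -> poly_fun (fun L O => \det (F L O)).
Proof.
move=> hF; apply: poly_fun_sum => s.
by apply: poly_fun_mul (poly_fun_const _) (poly_fun_prod _ _).
Qed.

Lemma poly_mx_mul k l q (F : _ -> _ -> 'M[R]_(k, l)) (G : _ -> _ -> 'M[R]_(l, q)) :
  poly_mx F -> poly_mx G -> poly_mx (fun L O => F L O *m G L O).
Proof.
move=> hF hG i j; apply: poly_fun_ext (poly_fun_sum (index_enum _)
  (fun x => poly_fun_mul (hF i x) (hG x j))) => L O.
by rewrite mxE.
Qed.

Lemma poly_mx_tr k l (F : _ -> _ -> 'M[R]_(k, l)) :
  poly_mx F -> poly_mx (fun L O => (F L O)^T).
Proof. by move=> hF i j; apply: poly_fun_ext (hF j i) => L O; rewrite mxE. Qed.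

(* Cofactors are minors, hence polynomial. *)
Lemma poly_mx_adj k (F : _ -> _ -> 'M[R]_k) :
  poly_mx F -> poly_mx (fun L O => \adj (F L O)).
Proof.
move=> hF i j; apply: poly_fun_ext (poly_fun_mul (poly_fun_const ((-1) ^+ (j + i)))
  (@poly_fun_det _ (fun L O => row' j (col' i (F L O))) _)) => [L O|].
  by rewrite mxE.
by move=> a b; apply: poly_fun_ext (hF _ _) => L O; rewrite !mxE.
Qed.

Lemma poly_mx_Omega : poly_mx (fun (L : 'M[R]_m) O => O).
Proof. by move=> i j; exists (MVar _ (inr (i, j))). Qed.

Lemma poly_mx_I_Lambda : poly_mx (fun L (O : 'M[R]_m) => 1%:M - L).
Proof.
move=> i j; exists (MAdd (MConst _ (i == j)%:R) (MMul (MConst _ (-1)) (MVar _ (inl (i, j))))).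
by move=> L O /=; rewrite !mxE mulN1r.
Qed.

End PolynomialFunctions.

Local Open Scope ring_scope.

Lemma generically_nonzero_of_witness (R : realFieldType) m (D B : rel 'I_m) (k : nat)
    (f g : 'M[R]_m -> 'M[R]_m -> R) :
  poly_fun g ->
  (forall L O, in_Theta D B L O -> g L O = \det (1%:M - L) ^+ k * f L O) ->
  (exists L O, in_Theta D B L O /\ f L O != 0) ->
  generically_nonzero D B f.
Proof.
move=> [q hq] hgf [L0 [O0 [hT hf]]]; exists [:: q]; split.
  exists L0, O0; split => //=; rewrite orbF hq hgf // mulf_neq0 // expf_neq0 //.
  by case: hT => [[_]]; rewrite unitmxE unitfE.
move=> L O hLO /=; rewrite orbF hq hgf //.
by apply: contra => /eqP ->; rewrite mulr0.
Qed.

Section ClearingDenominators.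
Variables (R : realFieldType) (m n : nat) (y p : 'I_n -> 'I_m) (H : {set 'I_m}).

Definition A_mx (L O : 'M[R]_m) : 'M[R]_n :=
  \matrix_(i < n, j < n)
     if y i \in H then ((1%:M - L)^T *m Sigma L O) (y i) (p j)
     else Sigma L O (y i) (p j).

(* A with its rows multiplied by det (I - Lambda) ^+ 2, using invmx = adj / det. *)
Definition A_cleared (L O : 'M[R]_m) : 'M[R]_n :=
  \matrix_(i < n, j < n)
     if y i \in H then \det (1%:M - L) * (O *m \adj (1%:M - L)) (y i) (p j)
     else ((\adj (1%:M - L))^T *m O *m \adj (1%:M - L)) (y i) (p j).

Lemma poly_det_A_cleared : poly_fun (fun L O => \det (A_cleared L O)).
Proof.
apply: poly_fun_det => i j.
have hadj := poly_mx_adj (@poly_mx_I_Lambda R m).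
case: (boolP (y i \in H)) => hy.
  apply: poly_fun_ext (poly_fun_mul (poly_fun_det (@poly_mx_I_Lambda R m))
                                    (poly_mx_mul (@poly_mx_Omega R m) hadj (y i) (p j))).
  by move=> L O; rewrite [RHS]mxE hy.
apply: poly_fun_ext (poly_mx_mul (poly_mx_mul (poly_mx_tr hadj) (@poly_mx_Omega R m)) hadj
                                 (y i) (p j)).
by move=> L O; rewrite [RHS]mxE (negbTE hy).
Qed.

Lemma det_A_cleared L O : (1%:M - L) \in unitmx ->
  \det (A_cleared L O) = \det (1%:M - L) ^+ (2 * n) * \det (A_mx L O).
Proof.
move=> hu; set d := \det (1%:M - L).
have hd : d != 0 by move: hu; rewrite unitmxE unitfE.
have hinv : invmx (1%:M - L) = d^-1 *: \adj (1%:M - L) by rewrite /invmx hu.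
suff -> : A_cleared L O = d ^+ 2 *: A_mx L O by rewrite detZ exprM.
have hIS : (1%:M - L)^T *m Sigma L O = O *m invmx (1%:M - L).
  by rewrite /Sigma !mulmxA -trmx_mul mulVmx // trmx1 mul1mx.
have trZ : (d^-1 *: \adj (1%:M - L))^T = d^-1 *: (\adj (1%:M - L))^T.
  by apply/matrixP => a b; rewrite !mxE.
rewrite /A_mx hIS /Sigma hinv trZ -scalemxAl -!scalemxAr -!scalemxAl scalerA.
apply/matrixP => i j; rewrite !mxE; case: ifP => _.
  by rewrite -/d expr2 -mulrA mulVKf.
by rewrite -/d mulrA -expr2 -exprMn mulfV // expr1n mul1r.
Qed.

End ClearingDenominators.

(* If every nonzero off-diagonal entry C i c satisfies f c < f i for some
   ranking f of the indices, only the identity permutation contributes to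
   the determinant: a permutation s <> 1 supported on nonzero entries would
   give \sum_i f (s i) < \sum_i f i. *)
Lemma det_ranked (R : comRingType) k (C : 'M[R]_k) (f : 'I_k -> nat) :
  (forall i c, i != c -> C i c != 0 -> (f c < f i)%N) -> \det C = \prod_i C i i.
Proof.
move=> hf; rewrite /determinant (bigD1 (1%g : 'S_k)) //= [X in _ + X]big1.
  by rewrite addr0 odd_perm1 expr0 mul1r; apply: eq_bigr => i _; rewrite perm1.
move=> s hs; case: (boolP [forall i, C i (s i) != 0]) => [/forallP hall|]; last first.
  by rewrite negb_forall => /existsP [i /negPn /eqP hi]; rewrite (bigD1 i) //= hi mul0r mulr0.
have [i0 hi0] : exists i0, s i0 != i0.
  apply/existsP; apply: contraR hs; rewrite negb_exists => /forallP h.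
  by apply/eqP/permP => i; rewrite perm1; apply/eqP/negPn.
have hle i : (f (s i) <= f i)%N.
  case: (eqVneq i (s i)) => [<-//| ne]; apply: ltnW; exact: hf _ _ ne (hall i).
have : (\sum_i f (s i) < \sum_i f i)%N.
  rewrite (bigD1 i0) //= [X in (_ < X)%N](bigD1 i0) //= -addSn; apply: leq_add.
    by apply: hf; [rewrite eq_sym | apply: hall].
  by apply: leq_sum => i _; apply: hle.
by rewrite [X in (_ < X)%N](reindex_inj (@perm_inj _ s)) /= ltnn.
Qed.

Lemma nonzero_sum_witness (V : nmodType) (I : finType) (P : pred I) (F : I -> V) :
  \sum_(k | P k) F k != 0 -> exists2 k, P k & F k != 0.
Proof.
move=> h; apply/exists_inP; apply: contraR h; rewrite negb_exists_in => /forall_inP h.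
by rewrite big1 // => k /h /negPn /eqP.
Qed.

Lemma path_drop_index (T : eqType) (e : rel T) h t a :
  path e h t -> a \in h :: t -> path e a (drop (index a (h :: t)).+1 (h :: t)).
Proof.
elim: t h => [|h' t IH] h; first by [].
rewrite /= => /andP[ehh' pt]; case: (eqVneq h a) => [<- _ | nha]; first by rewrite /= ehh'.
by rewrite inE eq_sym (negbTE nha) /= => /(IH _ pt).
Qed.

Lemma last_drop (A : Type) (x0 x1 : A) (s : seq A) (i : nat) :
  (i < size s)%N -> last x0 (drop i s) = last x1 s.
Proof. by elim: s i x0 x1 => [|a s IH] [|i] x0 x1 //= hi; apply: IH. Qed.

Lemma pairwise_disjoint_nth (A : Type) (U : finType) (f : A -> seq U) (x0 : A) (s : seq A)
    (a b : nat) :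
  pairwise (fun u v => [disjoint f u & f v]) s -> (a < size s)%N -> (b < size s)%N -> a != b ->
  [disjoint f (nth x0 s a) & f (nth x0 s b)].
Proof.
move=> /(pairwiseP x0) hp ha hb; case: ltngtP => // hab _; first exact: hp.
by rewrite disjoint_sym; apply: hp.
Qed.

Section TrekFamilies.
Variables (m : nat) (D B : rel 'I_m) (n : nat) (y : 'I_n -> 'I_m) (T : {set 'I_m}).

(* A system of half-treks from the y i into T, recorded by right sides: [r i]
   is the right side of a half-trek from [y i] ending in T, without repeated
   nodes, and distinct right sides are disjoint. *)
Definition trek_family (r : 'I_n -> seq 'I_m) : Prop :=
  [/\ forall i, half_trek D B (y i) (r i),
      forall i, uniq (r i),
      forall i j x, x \in r i -> x \in r j -> i = j &
      forall i, last (y i) (r i) \in T].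

Definition trek_top (r : 'I_n -> seq 'I_m) (k : 'I_n) : 'I_m := head (y k) (r k).

Definition bidirected_start (r : 'I_n -> seq 'I_m) (k : 'I_n) : bool := trek_top r k != y k.

Definition trek_weight (r : 'I_n -> seq 'I_m) : nat :=
  \sum_i (size (r i) + bidirected_start r i).

Definition blocks (r : 'I_n -> seq 'I_m) : rel 'I_n :=
  fun k k' => bidirected_start r k && (y k \in r k').

Definition acyclic_family (r : 'I_n -> seq 'I_m) : bool :=
  [forall k, forall k', blocks r k k' ==> ~~ connect (blocks r) k' k].

Hypothesis y_inj : injective y.

Lemma indexed_ht_system (Y : {set 'I_m}) : Y = [set y i | i : 'I_n] ->
  ht_system D B Y T ->
  exists r0 : 'I_n -> seq 'I_m,
    [/\ forall i, half_trek D B (y i) (r0 i),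
        forall i j x, x \in r0 i -> x \in r0 j -> i = j &
        forall i, last (y i) (r0 i) \in T].
Proof.
move=> hY [s [hall [_ [hX [_ [hT [_ hright]]]]]]].
have src_in i : y i \in map fst s by rewrite -[_ \in _]in_set hX hY imset_f.
pose idx i := index (y i) (map fst s).
have idx_lt i : (idx i < size s)%N by rewrite -(size_map fst) index_mem.
pose t i := nth (y i, [::]) s (idx i).
have t_src i : (t i).1 = y i by rewrite /t -(nth_map _ (y i)) ?nth_index.
exists (fun i => (t i).2); split.
- by move=> i; have := allP hall _ (mem_nth (y i, [::]) (idx_lt i)); rewrite -/(t i) t_src.
- move=> i j x hi hj; case: (eqVneq i j) => // ij; exfalso.
  have idx_ij : idx i != idx j.
    apply: contra_neq ij => e; apply: y_inj.
    by rewrite -(nth_index (y i) (src_in i)) -(nth_index (y i) (src_in j)) -/(idx i) -/(idx j) e.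
  have := pairwise_disjoint_nth (y i, [::]) hright (idx_lt i) (idx_lt j) idx_ij.
  by rewrite (set_nth_default (y j, [::]) _ (idx_lt j)) => /disjointFr /(_ hi); rewrite hj.
- move=> i; rewrite -t_src -hT inE -/(ht_target (t i).1 (t i).2) /t.
  exact: (map_f (fun u => ht_target u.1 u.2) (mem_nth (y i, [::]) (idx_lt i))).
Qed.

(* Removing loops from the right sides turns disjoint half-treks into a trek family. *)
Lemma trek_family_of_treks (r0 : 'I_n -> seq 'I_m) :
  (forall i, half_trek D B (y i) (r0 i)) ->
  (forall i j x, x \in r0 i -> x \in r0 j -> i = j) ->
  (forall i, last (y i) (r0 i) \in T) -> exists r, trek_family r.
Proof.
move=> h_ht h_disj h_last.
pose r i := if r0 i is h :: t then h :: shorten h t else [::].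
have r_spec i : [/\ half_trek D B (y i) (r i), uniq (r i), {subset r i <= r0 i} &
                    last (y i) (r i) = last (y i) (r0 i)].
  have := h_ht i; rewrite /r /half_trek; case: (r0 i) => [|h t] // /andP[hh pt].
  rewrite /=; case: (shortenP pt) => t' pt' ut' sub_t'; split => //=; first by rewrite hh.
  by move=> z; rewrite !inE => /orP[->//|/sub_t' ->]; rewrite orbT.
exists r; split=> [i|i|i j x hi hj|i].
- by case: (r_spec i).
- by case: (r_spec i).
- case: (r_spec i) (r_spec j) => _ _ sub_i _ [_ _ sub_j _].
  exact: h_disj (sub_i _ hi) (sub_j _ hj).
- by case: (r_spec i) => _ _ _ ->.
Qed.

Section Rotation.
(* A cycle k_1, ..., k_l of the [blocks] relation can be removed: trek k_i is
   replaced by the tail of trek k_(i+1) from y k_i on, which starts with a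
   directed edge; this strictly decreases the weight. *)
Variables (r : 'I_n -> seq 'I_m) (cyc : seq 'I_n).
Hypotheses (fam : trek_family r) (cyc_blocks : path.cycle (blocks r) cyc) (cyc_uniq : uniq cyc).

Definition rotated (x : 'I_n) : seq 'I_m :=
  if x \in cyc then drop (index (y x) (r (next cyc x))) (r (next cyc x)) else r x.

Let blocks_next x : x \in cyc -> blocks r x (next cyc x).
Proof. by move=> hx; apply: next_cycle cyc_blocks hx. Qed.

Let src_in_next x : x \in cyc -> y x \in r (next cyc x).
Proof. by move=> /blocks_next /andP[]. Qed.

Let rotatedE x : x \in cyc -> rotated x =
  y x :: drop (index (y x) (r (next cyc x))).+1 (r (next cyc x)).
Proof. by move=> hx; rewrite /rotated hx (drop_nth (y x)) ?index_mem ?nth_index ?src_in_next. Qed.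

Let rotated_sub x : {subset rotated x <= r (next cyc x)}.
Proof.
rewrite /rotated; case: ifP => hx z; first exact: mem_drop.
by rewrite next_nth hx.
Qed.

Lemma rotated_family : trek_family rotated.
Proof.
case: fam => h_ht h_uniq h_disj h_last; split.
- move=> x; case hx: (x \in cyc); last by rewrite /rotated hx.
  rewrite rotatedE // /half_trek eqxx /=.
  have := h_ht (next cyc x); rewrite /half_trek.
  case E: (r (next cyc x)) => [|h t] // /andP[_ pt].
  by apply: path_drop_index pt _; rewrite -E src_in_next.
- by move=> x; rewrite /rotated; case: ifP => _; [apply: drop_uniq | apply: h_uniq].
- move=> i j x hi hj; apply: (can_inj (prev_next cyc_uniq)).
  exact: h_disj (rotated_sub hi) (rotated_sub hj).
- move=> x; case hx: (x \in cyc); last by rewrite /rotated hx.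
  by rewrite /rotated hx (last_drop _ (y (next cyc x))) ?index_mem ?src_in_next.
Qed.

Lemma rotated_weight : cyc != [::] -> (trek_weight rotated < trek_weight r)%N.
Proof.
move=> cyc_ne; have [k hk] : exists k, k \in cyc.
  by case: (cyc) cyc_ne => [|k s] // _; exists k; rewrite mem_head.
have step x : x \in cyc ->
    (size (rotated x) + bidirected_start rotated x <
     size (r (next cyc x)) + bidirected_start r (next cyc x))%N.
  move=> hx; have /andP[bid_next _] := blocks_next (etrans (mem_next cyc x) hx).
  have := src_in_next hx; rewrite -index_mem bid_next.
  by rewrite /bidirected_start /trek_top rotatedE //= eqxx size_drop; lia.
have fixed x : x \notin cyc -> next cyc x = x by move=> hx; rewrite next_nth (negbTE hx).
rewrite /trek_weight [X in (_ < X)%N](reindex_inj (can_inj (prev_next cyc_uniq))) /=.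
rewrite (bigD1 k) // [X in (_ < X)%N](bigD1 k) //= -addSn.
apply: leq_add; first exact: step.
apply: leq_sum => x _; case: (boolP (x \in cyc)) => hx; first exact/ltnW/step.
by rewrite fixed // /bidirected_start /trek_top /rotated (negbTE hx).
Qed.

End Rotation.

(* A trek family of minimal weight has an acyclic [blocks] relation. *)
Lemma acyclic_trek_family r : trek_family r -> exists r', trek_family r' /\ acyclic_family r'.
Proof.
have [N] := ubnP (trek_weight r); elim: N r => // N IH r wr fam.
case ac: (acyclic_family r); first by exists r.
move/negbT: ac => /forallPn [k /forallPn [k']]; rewrite negb_imply negbK.
case/andP => kk' /connectP [s ps lst]; case: (shortenP ps) lst => s' ps' us' _ lst.
have cyc_blocks : path.cycle (blocks r) (k' :: s') by rewrite /= rcons_path ps' -lst kk'.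
apply: (IH (rotated r (k' :: s'))); last exact: rotated_family.
by rewrite -ltnS; apply: leq_trans wr; apply: rotated_weight.
Qed.

End TrekFamilies.

Section WitnessPoint.
(* An acyclic trek family yields a point of Theta at which det A is nonzero:
   Lambda has a unit entry on each directed edge of the right sides, and Omega
   is the identity plus a rank-one term [u_k u_k^T] linking y k with its
   sibling for each trek k that starts with a bidirected edge. *)
Variables (R : realFieldType) (m : nat) (D B : rel 'I_m) (n : nat) (y : 'I_n -> 'I_m)
  (T : {set 'I_m}) (r : 'I_n -> seq 'I_m).
Hypotheses (B_sym : symmetric B) (y_inj : injective y)
  (fam : trek_family D B y T r) (acyc : acyclic_family y r).

Local Notation top := (trek_top y r).
Local Notation bid := (bidirected_start y r).

Let trek_ht k : half_trek D B (y k) (r k). Proof. by case: fam. Qed.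
Let trek_uniq k : uniq (r k). Proof. by case: fam. Qed.
Let trek_disj k k' x : x \in r k -> x \in r k' -> k = k'.
Proof. by case: fam => _ _ h _; apply: h. Qed.

Let trek_cons k : exists h t, r k = h :: t.
Proof. by have := trek_ht k; rewrite /half_trek; case: (r k) => [|h t] //; exists h, t. Qed.

Lemma top_in k : top k \in r k.
Proof. by case: (trek_cons k) => h [t e]; rewrite /trek_top e mem_head. Qed.

Lemma index_top k : index (top k) (r k) = 0%N.
Proof. by case: (trek_cons k) => h [t e]; rewrite /trek_top e /= eqxx. Qed.

Lemma last_in k : last (y k) (r k) \in r k.
Proof. by case: (trek_cons k) => h [t e]; rewrite e /= mem_last. Qed.

Lemma bid_sib k : bid k -> B (y k) (top k).
Proof.
have := trek_ht k; rewrite /bidirected_start /trek_top /half_trek.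
by case: (r k) => [|h t] //=; case: eqP => //= _ /andP[].
Qed.

Lemma top_direct k : ~~ bid k -> top k = y k.
Proof. by rewrite negbK => /eqP. Qed.

Lemma index_lt_m x k : x \in r k -> (index x (r k) < m)%N.
Proof.
move=> hx; apply: leq_trans (_ : size (r k) <= m)%N; first by rewrite index_mem.
by rewrite -(card_uniqP (trek_uniq k)); apply: leq_trans (max_card _) _; rewrite card_ord.
Qed.

Definition trek_succ (x z : 'I_m) : bool :=
  [exists k, (x \in r k) && (z \in r k) && (index z (r k) == (index x (r k)).+1)].
Definition trek_before (x z : 'I_m) : bool :=
  [exists k, (x \in r k) && (z \in r k) && (index x (r k) < index z (r k))%N].

Lemma succE x z k : x \in r k ->
  trek_succ x z = (z \in r k) && (index z (r k) == (index x (r k)).+1).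
Proof.
move=> hx; apply/existsP/idP => [[k' /andP[/andP[h1 h2] h3]]|/andP[h1 h2]].
  by rewrite (trek_disj hx h1) h2 h3.
by exists k; rewrite hx h1 h2.
Qed.

Lemma beforeE x z k : x \in r k ->
  trek_before x z = (z \in r k) && (index x (r k) < index z (r k))%N.
Proof.
move=> hx; apply/existsP/idP => [[k' /andP[/andP[h1 h2] h3]]|/andP[h1 h2]].
  by rewrite (trek_disj hx h1) h2 h3.
by exists k; rewrite hx h1 h2.
Qed.

Lemma before_irrefl x : ~~ trek_before x x.
Proof. by apply/existsP => [[k /andP[_]]]; rewrite ltnn. Qed.

Lemma succ_edge x z : trek_succ x z -> D x z.
Proof.
case/existsP => k /andP[/andP[hx hz] /eqP hi].
have := trek_ht k; rewrite /half_trek; case E: (r k) => [|h t] // /andP[_ pt].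
have hlt : (index x (r k) < size t)%N.
  by rewrite -ltnS -[X in (_ < X)%N]/(size (h :: t)) -E -hi index_mem.
have at_x : nth x (h :: t) (index x (r k)) = x by rewrite -E nth_index.
have at_z : nth x t (index x (r k)) = z.
  by rewrite -[t]/(behead (h :: t)) nth_behead -E -hi nth_index.
by have := (pathP x pt) _ hlt; rewrite at_x at_z.
Qed.

(* Successors are unique and [trek_before] is the transitive closure of
   [trek_succ]; this makes Reach below the inverse of I - Lambda. *)
Lemma succ_unique x w w' : trek_succ x w -> trek_succ x w' -> w = w'.
Proof.
case/existsP => k /andP[/andP[hx hw] /eqP hi]; rewrite (succE _ hx) => /andP[hw' /eqP hi'].
by apply: (index_inj x hw hw'); rewrite hi hi'.
Qed.

Lemma before_succ x w z : trek_succ x w ->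
  ((w == z) || trek_before w z) = trek_before x z.
Proof.
case/existsP => k /andP[/andP[hx hw] /eqP hi].
rewrite (beforeE _ hx) (beforeE _ hw) hi.
case hz: (z \in r k) => /=; last by rewrite orbF; apply: negbTE; apply: contraFneq hz => <-.
by rewrite -(inj_in_eq (@index_inj _ x (r k)) hw hz) hi -leq_eqVlt.
Qed.

Lemma before_has_succ x z : trek_before x z -> exists w, trek_succ x w.
Proof.
case/existsP => k /andP[/andP[hx hz] hlt]; exists (nth x (r k) (index x (r k)).+1).
have hs : ((index x (r k)).+1 < size (r k))%N by apply: leq_ltn_trans hlt _; rewrite index_mem.
by rewrite (succE _ hx) mem_nth //= index_uniq.
Qed.

Definition sib_link (a b : 'I_m) : Prop :=
  exists2 k, bid k & (a == y k) && (b == top k) || (a == top k) && (b == y k).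

Definition descendants (k : 'I_n) : nat := #|[set x | connect (blocks y r) k x]|.

Lemma descendants_lt k k' : blocks y r k k' -> (descendants k' < descendants k)%N.
Proof.
move=> hk; apply: proper_card; apply/properP; split.
  by apply/subsetP => x; rewrite !inE; apply: connect_trans (connect1 hk).
exists k; rewrite !inE ?connect0 //.
by move: acyc => /forallP/(_ k)/forallP/(_ k')/implyP/(_ hk).
Qed.

(* Rank of row i: if y i lies on trek k, its position there, shifted by
   m * (descendants k); every nonzero off-diagonal entry of the (column
   permuted) witness matrix goes from a row to a row of smaller rank. *)
Definition rank (i : 'I_n) : nat :=
  if [pick k | y i \in r k] is Some k then (descendants k * m + index (y i) (r k)).+1 else 0.

Lemma rankE i k : y i \in r k -> rank i = (descendants k * m + index (y i) (r k)).+1.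
Proof.
rewrite /rank; case: pickP => [k' hk'|h] hy; first by rewrite (trek_disj hk' hy).
by rewrite h in hy.
Qed.

Lemma rank_direct c : ~~ bid c -> rank c = (descendants c * m).+1.
Proof. by move=> hc; rewrite (rankE (k := c)) -(top_direct hc) ?top_in // index_top addn0. Qed.

Lemma rank_bid c : bid c -> (rank c <= descendants c * m)%N.
Proof.
move=> hc; rewrite /rank; case: pickP => [k hk|//].
have hlt : (descendants k < descendants c)%N by apply: descendants_lt; apply/andP.
apply: leq_trans (_ : (descendants k).+1 * m <= _)%N; last by rewrite leq_mul2r hlt orbT.
by rewrite mulSn addnC -addSn leq_add2r index_lt_m.
Qed.

Lemma rank_le c : (rank c <= (descendants c).+1 * m)%N.
Proof.
have m_gt0 : (0 < m)%N by case: (y c) => x hx; apply: leq_ltn_trans hx.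
case: (boolP (bid c)) => hc.
  by apply: leq_trans (rank_bid hc) _; rewrite leq_mul2r leqnSn orbT.
by rewrite rank_direct // mulSn -[X in (X < _)%N]add0n ltn_add2r.
Qed.

Lemma at_or_before a x k : (a == x) || trek_before a x -> a \in r k ->
  x \in r k /\ (index a (r k) <= index x (r k))%N.
Proof.
case/orP => [/eqP <- //| hb ha]; move: hb; rewrite (beforeE _ ha).
by case/andP => -> /ltnW.
Qed.

(* Three cases: a = b lies on trek c
   before y i; a = y c sits before y i on some trek; or a = top l and
   b = y l, so that l blocks c and c has fewer descendants. *)
Lemma rank_decreases i c a b : i != c -> (a == y i) || trek_before a (y i) ->
  b \in r c -> (a = b \/ sib_link a b) -> (rank c < rank i)%N.
Proof.
move=> ic ha hb [eab | [l hl hlink]].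
- rewrite -eab in hb; have [hyc a_le] := at_or_before ha hb; rewrite (rankE hyc).
  case: (boolP (bid c)) => hc; first by apply: leq_ltn_trans (rank_bid hc) _; rewrite ltnS leq_addr.
  rewrite rank_direct // ltnS -[X in (X < _)%N]addn0 ltn_add2l lt0n.
  apply: contra_neq ic => e; apply: y_inj; rewrite -(top_direct hc).
  by apply: (index_inj (y i) hyc (top_in c)); rewrite e index_top.
- case/orP: hlink => /andP[/eqP ea /eqP eb].
  + have lc : l = c by apply: (trek_disj (top_in l)); rewrite -eb.
    subst l; move: ha; rewrite ea (inj_eq y_inj) eq_sym (negbTE ic) /=.
    by case/existsP => k /andP[/andP[h1 h2] h3]; rewrite (rankE h1) (rankE h2) ltnS ltn_add2l.
  + have [hyl _] := at_or_before ha (etrans (congr1 (fun z => z \in r l) ea) (top_in l)).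
    have hlc : blocks y r l c by apply/andP; rewrite -eb.
    rewrite (rankE hyl) ltnS; apply: leq_trans (rank_le c) _.
    by apply: leq_trans (leq_addr _ _); rewrite leq_mul2r descendants_lt ?orbT.
Qed.

Local Open Scope ring_scope.

Definition Lambda : 'M[R]_m := \matrix_(x, z) (trek_succ x z)%:R.

(* The candidate for (I - Lambda)^-1: reachability along the right sides. *)
Definition Reach : 'M[R]_m := \matrix_(x, z) ((x == z) || trek_before x z)%:R.

Lemma Lambda_Reach x z : (Lambda *m Reach) x z = (trek_before x z)%:R.
Proof.
rewrite mxE; case: (boolP [exists w, trek_succ x w]) => [/existsP [w0 hw0] | no_succ].
  rewrite (bigD1 w0) //= big1 => [|w ne_w]; last first.
    rewrite !mxE; case: (boolP (trek_succ x w)) => [/(succ_unique hw0) e|]; last by rewrite mul0r.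
    by rewrite e eqxx in ne_w.
  by rewrite !mxE hw0 mul1r addr0 (before_succ _ hw0).
have -> : trek_before x z = false.
  by apply: contraNF no_succ => /before_has_succ [w hw]; apply/existsP; exists w.
rewrite big1 // => w _; rewrite !mxE; case: (boolP (trek_succ x w)) => [hw|]; last by rewrite mul0r.
by case/negP: no_succ; apply/existsP; exists w.
Qed.

Lemma I_Lambda_Reach : (1%:M - Lambda) *m Reach = 1%:M.
Proof.
apply/matrixP => x z; rewrite mulmxBl mul1mx mxE [X in _ + X]mxE Lambda_Reach !mxE.
case: (eqVneq x z) => [<-|_]; first by rewrite (negbTE (before_irrefl x)) subr0.
by rewrite subrr.
Qed.

Lemma Lambda_reg : in_RDreg D Lambda.
Proof.
split; last exact: (mulmx1_unit I_Lambda_Reach).1.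
move=> x z; rewrite mxE; apply: contraNeq => /eqP; case hs: (trek_succ x z) => // _.
exact: succ_edge.
Qed.

Lemma inv_I_Lambda : invmx (1%:M - Lambda) = Reach.
Proof.
have [hu _] := mulmx1_unit I_Lambda_Reach.
by rewrite -[RHS](mulKmx hu Reach) I_Lambda_Reach mulmx1.
Qed.

Definition link_vec (k : 'I_n) (a : 'I_m) : R := (a == y k)%:R + (a == top k)%:R.

Definition Omega : 'M[R]_m :=
  1%:M + \sum_(k | bid k) ((\col_a link_vec k a) *m (\col_a link_vec k a)^T).

Lemma OmegaE a b : Omega a b = (a == b)%:R + \sum_(k | bid k) link_vec k a * link_vec k b.
Proof.
rewrite /Omega !mxE summxE; congr (_ + _); apply: eq_bigr => k _.
by rewrite !mxE big_ord1 !mxE.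
Qed.

Lemma link_vec_ge0 k a : 0 <= link_vec k a.
Proof. by rewrite addr_ge0 ?ler0n. Qed.

Lemma link_vec_supp k a : link_vec k a != 0 -> (a == y k) || (a == top k).
Proof. by rewrite /link_vec; case: (a == y k); case: (a == top k); rewrite //= addr0 eqxx. Qed.

Lemma Omega_ge0 a b : 0 <= Omega a b.
Proof. by rewrite OmegaE addr_ge0 ?ler0n // sumr_ge0 // => k _; rewrite mulr_ge0 ?link_vec_ge0. Qed.

Lemma Omega_supp a b : a != b -> Omega a b != 0 -> sib_link a b.
Proof.
move=> ab; rewrite OmegaE (negbTE ab) add0r => /nonzero_sum_witness [k hk].
rewrite mulf_eq0 negb_or => /andP[/link_vec_supp ha /link_vec_supp hb]; exists k => //.
case/orP: ha => /eqP ea; case/orP: hb => /eqP eb; rewrite ea eb ?eqxx ?orbT //.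
all: by rewrite ea eb eqxx in ab.
Qed.

(* Omega is symmetric, supported on the diagonal and on bidirected edges, and
   x^T Omega x = |x|^2 + sum_k (x . u_k)^2 > 0 for x <> 0. *)
Lemma Omega_PD : in_PD B Omega.
Proof.
split; [|split].
- apply/matrixP => a b; rewrite mxE !OmegaE eq_sym; congr (_ + _).
  by apply: eq_bigr => k _; rewrite mulrC.
- move=> a b ab nB; apply/eqP; apply: contraR nB => /(Omega_supp ab) [k hk].
  by case/orP => /andP[/eqP -> /eqP ->]; last rewrite B_sym; apply: bid_sib.
- move=> x x_neq0.
  have -> : x^T *m Omega *m x = x^T *m x +
      \sum_(k | bid k) ((x^T *m \col_a link_vec k a) *m (x^T *m \col_a link_vec k a)^T).
    rewrite /Omega mulmxDr mulmx1 mulmxDl; congr (_ + _).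
    rewrite mulmx_sumr mulmx_suml; apply: eq_bigr => k _.
    by rewrite trmx_mul trmxK !mulmxA.
  rewrite mxE summxE; apply: lt_le_trans (_ : 0 < (x^T *m x) 0 0) _.
    have [a xa] : exists a, x a 0 != 0.
      apply/existsP; move: x_neq0; apply: contraR; rewrite negb_exists => /forallP h.
      by apply/eqP/matrixP => a b; rewrite (ord1 b) mxE; apply/eqP/negPn.
    rewrite mxE (bigD1 a) //= !mxE; apply: ltr_pwDl.
      by rewrite -expr2 exprn_even_gt0 //= xa orbT.
    by apply: sumr_ge0 => c _; rewrite !mxE -expr2 sqr_ge0.
  by rewrite lerDl sumr_ge0 // => k _; rewrite !mxE big_ord1 !mxE -expr2 sqr_ge0.
Qed.

Lemma witness_in_Theta : in_Theta D B Lambda Omega.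
Proof. by split; [exact: Lambda_reg | exact: Omega_PD]. Qed.

Section Entries.
Variables (p : 'I_n -> 'I_m) (H : {set 'I_m}).

Lemma A_witnessE i j : A_mx y p H Lambda Omega i j =
  if y i \in H then (Omega *m Reach) (y i) (p j) else (Reach^T *m (Omega *m Reach)) (y i) (p j).
Proof.
have hIS : (1%:M - Lambda)^T *m Sigma Lambda Omega = Omega *m Reach.
  by rewrite /Sigma inv_I_Lambda !mulmxA -trmx_mul (mulmx1C I_Lambda_Reach) trmx1 mul1mx.
by rewrite /A_mx mxE hIS /Sigma inv_I_Lambda mulmxA.
Qed.

Lemma Reach_ge0 a b : 0 <= Reach a b.
Proof. by rewrite mxE ler0n. Qed.

Lemma OR_ge0 a b : 0 <= (Omega *m Reach) a b.
Proof. by rewrite mxE sumr_ge0 // => c _; rewrite mulr_ge0 ?Omega_ge0 ?Reach_ge0. Qed.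

Lemma Reach_supp a b : Reach a b != 0 -> (a == b) || trek_before a b.
Proof. by rewrite mxE; case: (_ || _) => //=; rewrite eqxx. Qed.

Lemma OR_last_ge1 i : 1 <= (Omega *m Reach) (y i) (last (y i) (r i)).
Proof.
have Omega_src_top : 1 <= Omega (y i) (top i).
  rewrite OmegaE; case: (boolP (bid i)) => hb.
    have ne : (y i == top i) = false by rewrite eq_sym; apply: negbTE.
    have link_i : link_vec i (y i) * link_vec i (top i) = 1.
      by rewrite /link_vec !eqxx ne (negbTE hb) add0r addr0 mulr1.
    rewrite ne add0r (bigD1 i) //= link_i lerDl.
    by rewrite sumr_ge0 // => k _; rewrite mulr_ge0 ?link_vec_ge0.
  by rewrite (top_direct hb) eqxx lerDl sumr_ge0 // => k _; rewrite mulr_ge0 ?link_vec_ge0.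
have Reach_top_last : Reach (top i) (last (y i) (r i)) = 1.
  rewrite mxE; case: eqP => //= ne.
  suff -> : trek_before (top i) (last (y i) (r i)) by [].
  rewrite (beforeE _ (top_in i)) last_in index_top lt0n /=.
  apply/eqP => e; apply: ne.
  by apply: (index_inj (y i) (top_in i) (last_in i)); rewrite e index_top.
rewrite mxE (bigD1 (top i)) //= Reach_top_last mulr1; apply: le_trans Omega_src_top _.
by rewrite lerDl sumr_ge0 // => c _; rewrite mulr_ge0 ?Omega_ge0 ?Reach_ge0.
Qed.

Lemma A_witness_diag i j : p j = last (y i) (r i) -> 1 <= A_mx y p H Lambda Omega i j.
Proof.
move=> e; rewrite A_witnessE e; case: ifP => _; first exact: OR_last_ge1.
rewrite mxE (bigD1 (y i)) //= mxE mxE eqxx mul1r; apply: le_trans (OR_last_ge1 i) _.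
by rewrite lerDl sumr_ge0 // => c _; rewrite mxE mulr_ge0 ?OR_ge0 ?Reach_ge0.
Qed.

Lemma A_witness_supp i j : A_mx y p H Lambda Omega i j != 0 ->
  exists a b, [/\ (a == y i) || trek_before a (y i), Omega a b != 0 &
                  (b == p j) || trek_before b (p j)].
Proof.
have OR_supp a : (Omega *m Reach) a (p j) != 0 ->
    exists2 b, Omega a b != 0 & (b == p j) || trek_before b (p j).
  rewrite mxE => /nonzero_sum_witness [b _]; rewrite mulf_eq0 negb_or.
  by case/andP => h1 /Reach_supp h2; exists b.
rewrite A_witnessE; case: ifP => _.
  by move=> /OR_supp [b h1 h2]; exists (y i), b; rewrite eqxx.
rewrite mxE => /nonzero_sum_witness [a _]; rewrite mxE mulf_eq0 negb_or.
by case/andP => /Reach_supp h1 /OR_supp [b h2 h3]; exists a, b.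
Qed.

End Entries.

(* At the witness, det A is the product of its (permuted) diagonal, which is >= 1. *)
Lemma witness_det_neq0 (p : 'I_n -> 'I_m) (H : {set 'I_m}) :
  T = [set p j | j : 'I_n] -> \det (A_mx y p H Lambda Omega) != 0.
Proof.
move=> hT; pose A := A_mx y p H Lambda Omega.
pose tau c := odflt c [pick j | p j == last (y c) (r c)].
have p_tau c : p (tau c) = last (y c) (r c).
  have : last (y c) (r c) \in T by case: fam.
  rewrite hT => /imsetP [j _ ej]; rewrite /tau; case: pickP => [j' /eqP //|h].
  by have := h j; rewrite ej eqxx.
have tau_inj : injective tau.
  move=> c c' e; apply: (trek_disj (last_in c)).
  by rewrite -p_tau e p_tau last_in.
pose s := perm tau_inj.
suff : \det (col_perm s A) != 0.
  by rewrite col_permE det_mulmx det_perm mulf_eq0 negb_or => /andP[].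
rewrite (@det_ranked _ _ _ rank).
  rewrite gt_eqF // prodr_gt0 // => i _; rewrite mxE permE.
  by apply: lt_le_trans ltr01 _; apply: A_witness_diag.
move=> i c ic; rewrite mxE permE => /A_witness_supp [a [b [ha hab hb]]].
apply: (rank_decreases (b := b) ic ha).
  rewrite p_tau in hb; case/orP: hb => [/eqP -> | /existsP [k /andP[/andP[hb hl] _]]].
    exact: last_in.
  by rewrite (trek_disj (last_in c) hl).
by case: (eqVneq a b) => [|ab]; [left | right; apply: Omega_supp].
Qed.

End WitnessPoint.

Unset Implicit Arguments.

Theorem mainTheorem13 (R : realFieldType) (m : nat) (D B : rel 'I_m) (v : 'I_m)
    (Y : {set 'I_m}) (n : nat) (y p : 'I_n -> 'I_m) (H : {set 'I_m}) :
  mixed_graph D B ->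
  Y \subset ~: (v |: sib B v) ->
  #|Y| = n -> #|pa D v| = n ->
  injective y -> injective p ->
  Y = [set y i | i : 'I_n] -> pa D v = [set p j | j : 'I_n] ->
  (forall w, w \in H <-> htr D B v w) ->
  HTC D B v Y ->
  generically_nonzero D B (fun L O : 'M[R]_m =>
    \det (\matrix_(i < n, j < n)
            if y i \in H then ((1%:M - L)^T *m Sigma L O) (y i) (p j)
            else Sigma L O (y i) (p j))).
Proof.
move=> [_ [_ B_sym]] _ _ _ y_inj _ hY hpa _ [_ [_ hsys]].
change (generically_nonzero D B (fun L O : 'M[R]_m => \det (A_mx y p H L O))).
have [r0 [ht0 disj0 last0]] := indexed_ht_system y_inj hY hsys.
have [r1 fam1] := trek_family_of_treks ht0 disj0 last0.
have [r [fam acyc]] := acyclic_trek_family fam1.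
apply: (generically_nonzero_of_witness (k := 2 * n) (poly_det_A_cleared R y p H)).
  by move=> L O [[_ hu] _]; apply: det_A_cleared.
exists (Lambda R r), (Omega R y r); split; first exact: witness_in_Theta B_sym fam.
exact: (witness_det_neq0 R y_inj fam acyc H hpa).
Qed.
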